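(* Assume (A1)–(A4). Then $T(x)<T^*$ for all $x\in B_{R^*}$.
   Context: Let $p>1$ and $\mu>0$ with $p<1+2/\mu$, and let $R^*,T^*>0$. Write $B_R=\{x\in\mathbb{R}:|x|<R\}$. Fix $\gamma_1,\gamma_2>0$ with $\gamma_1+\gamma_2>\max\big(1,(\mu p 2^p)^{1/(p-1)}\big)$ and let $T_1=\frac{1}{(p-1)\mu}\ln\Big(\frac{2^{1-p}/\mu}{2^{1-p}/\mu-(\gamma_1+\gamma_2)^{1-p}}\Big)$, the finite blow-up time of the solution of $\hat\phi'=\hat\psi'=2^{-p}|\hat\phi+\hat\psi|^p-\frac{\mu}{2}(\hat\phi+\hat\psi)$, $\hat\phi(0)=\gamma_1$, $\hat\psi(0)=\gamma_2$. Assumptions on the real functions $f,g$: (A1) $T_1<T^*$. (A2) $f\ge\gamma_1$, $g\ge\gamma_2$ on $B_{R^*+T^*}$. (A3) $f,g\in\mathcal{C}^4(\overline{B_{R^*+T^*}})$. (A4) There is $\varepsilon_0>0$ with $2^{-p}(\gamma_1+\gamma_2)^p-\frac{\mu}{2}(\gamma_1+\gamma_2)\ge(2+\varepsilon_0)\max_{x\in B_{R^*+T^*}}(|f'(x)|+|g'(x)|)$. Let $K_{R^*,T^*}=\{(x,t):t>0,\ |x-x_0|<T^*-t\ \text{for some } x_0\in B_{R^*}\}$. Define iterates $\phi_0\equiv\gamma_1$, $\psi_0\equiv\gamma_2$ and, with $\mathcal{N}_n(x,s)=2^{-p}|\phi_n+\psi_n|^p(x,s)-\frac{\mu}{1+s}\frac{(\phi_n+\psi_n)(x,s)}{2}$,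 $\phi_{n+1}(x,t)=f(x+t)+\int_0^t\mathcal{N}_n(x+t-s,s)\,ds$, $\psi_{n+1}(x,t)=g(x-t)+\int_0^t\mathcal{N}_n(x-t+s,s)\,ds$. Set $\phi=\sup_n\phi_n$, $\psi=\sup_n\psi_n$ on $K_{R^*,T^*}$, and let $T(x)$, $x\in B_{R^*}$, be the blow-up time of $\phi+\psi$ at $x$, i.e. the supremum of $t>0$ such that $(\phi+\psi)(x,\tau)<\infty$ for $\tau<t$. *)

From Stdlib Require Import Reals.
From Coquelicot Require Import Coquelicot.
Open Scope R_scope.

(* |u|^p for p > 0, with the correct value 0 at u = 0
   (Stdlib's Rpower 0 p = 1, so we guard it). *)
Definition powabs (u p : R) : R :=
  if Rlt_dec 0 (Rabs u) then Rpower (Rabs u) p else 0.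

Definition Nl (p mu : R) (ph ps : R -> R -> R) (y s : R) : R :=
  Rpower 2 (- p) * powabs (ph y s + ps y s) p
  - mu / (1 + s) * ((ph y s + ps y s) / 2).

Fixpoint iterates (p mu g1 g2 : R) (f g : R -> R) (n : nat)
  : (R -> R -> R) * (R -> R -> R) :=
  match n with
  | O => (fun _ _ => g1, fun _ _ => g2)
  | S m =>
      let pr := iterates p mu g1 g2 f g m in
      let N := Nl p mu (fst pr) (snd pr) in
      (fun x t => f (x + t) + RInt (fun s => N (x + t - s) s) 0 t,
       fun x t => g (x - t) + RInt (fun s => N (x - t + s) s) 0 t)
  end.

Definition phi_n p mu g1 g2 f g n := fst (iterates p mu g1 g2 f g n).
Definition psi_n p mu g1 g2 f g n := snd (iterates p mu g1 g2 f g n).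

Definition phi_sup p mu g1 g2 f g (x t : R) : Rbar :=
  Sup_seq (fun n => phi_n p mu g1 g2 f g n x t).
Definition psi_sup p mu g1 g2 f g (x t : R) : Rbar :=
  Sup_seq (fun n => psi_n p mu g1 g2 f g n x t).

(* Blow-up time at x in B_{R*}: sup of t in (0,T*] (so that (x,tau) stays in
   K_{R*,T*}) such that (phi+psi)(x,tau) < +oo for all 0 < tau < t. *)
Definition blowup_time p mu g1 g2 f g (Tstar x : R) : Rbar :=
  Lub_Rbar (fun t => 0 < t <= Tstar /\
    forall tau, 0 < tau < t ->
      Rbar_lt (Rbar_plus (phi_sup p mu g1 g2 f g x tau)
                         (psi_sup p mu g1 g2 f g x tau)) p_infty).

Definition T1 (p mu g1 g2 : R) : R :=
  / ((p - 1) * mu) *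
  ln ((Rpower 2 (1 - p) / mu) /
      (Rpower 2 (1 - p) / mu - Rpower (g1 + g2) (1 - p))).

Definition C4_closed_ball (r : R) (f : R -> R) : Prop :=
  (forall x, Rabs x <= r ->
     filterlim f (within (fun y => Rabs y <= r) (locally x)) (locally (f x))) /\
  (forall k x, (k < 4)%nat -> Rabs x < r -> ex_derive (Derive_n f k) x) /\
  (forall k, (k <= 4)%nat -> exists h : R -> R,
     (forall x, Rabs x < r -> h x = Derive_n f k x) /\
     (forall x, Rabs x <= r ->
        filterlim h (within (fun y => Rabs y <= r) (locally x)) (locally (h x)))).

From Stdlib Require Import Reals Lra Lia.
From Coquelicot Require Import Coquelicot.
Open Scope R_scope.

(* Along the characteristics [x + t] and [x - t] the iterates obey Duhamel's formula
   with a source bounded below by [reaction (phi + psi)], where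
   [reaction A = 2^-p A^p - mu A / 2] is nonnegative and increasing above [g1 + g2]
   (the damping [mu / (1 + s)] is at most [mu]). Hence, by induction along a
   staircase, once [t >= d_0 + ... + d_(k-1)] all late iterates satisfy
   [phi_n + psi_n >= A_k], for levels [A_(k+1) = A_k + 2 d_k reaction A_k]. With
   geometric levels [A_k = (g1 + g2) exp (k e)], [d_k] is the time the comparison ODE
   [A' = 2 reaction A] would need from [A_k] to [A_(k+1)] at its speed at [A_k];
   comparing with the exact ODE time, [-ln (1 - z) / ((p - 1) mu)] with
   [z = mu A / (2^(1-p) A^p)], gives [sum d_k <= rho(e) T1] with [rho(e) -> 1] as
   [e -> 0]. So for small [e] the sums [phi_n + psi_n] are unbounded at every time
   [rho(e) T1 < t < T*], and the blow-up time is at most [rho(e) T1 < T*].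
   The Duhamel integrands are Riemann integrable because the iterates are continuous
   in the cone of dependence, as shown by clamping [f], [g] outside the ball. *)

Lemma powabs_continuity_pt p u : 0 < p -> continuity_pt (fun v => powabs v p) u.
Proof.
intros Hp.
destruct (Req_dec u 0) as [->|Hu].
- intros eps Heps. exists (Rpower eps (/ p)). split.
  { apply exp_pos. }
  intros v [_ Hv]. simpl in *. unfold R_dist in *. rewrite Rminus_0_r in Hv.
  unfold powabs. rewrite Rabs_R0. destruct (Rlt_dec 0 0); [lra|].
  destruct (Rlt_dec 0 (Rabs v)) as [Hv0|]; rewrite Rminus_0_r.
  + rewrite Rabs_pos_eq by (left; apply exp_pos).
    replace eps with (Rpower (Rpower eps (/ p)) p)
      by (rewrite Rpower_mult, Rinv_l by lra; apply Rpower_1; lra).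
    apply Rlt_Rpower_l; lra.
  + rewrite Rabs_R0; lra.
- assert (Hu0 : 0 < Rabs u) by (apply Rabs_pos_lt; auto).
  apply continuity_pt_filterlim.
  apply filterlim_ext_loc with (f := fun v => Rpower (Rabs v) p).
  + exists (mkposreal _ Hu0). intros v Hv. change (Rabs (v - u) < Rabs u) in Hv.
    unfold powabs. destruct (Rlt_dec 0 (Rabs v)) as [|Hv0]; auto.
    pose proof (Rabs_triang_inv u v). rewrite <- Rabs_Ropp, Ropp_minus_distr in Hv. lra.
  + unfold powabs. destruct (Rlt_dec 0 (Rabs u)); [|lra].
    apply (continuity_pt_filterlim (fun v => Rpower (Rabs v) p)).
    apply (continuity_pt_comp Rabs (fun a => Rpower a p)).
    * apply Rcontinuity_abs.
    * apply derivable_continuous_pt. exists (p * Rpower (Rabs u) (p - 1)).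
      apply derivable_pt_lim_power. lra.
Qed.

(* The retraction of [R] onto [[-r, r]]; continuous data on the closed ball
   become continuous on [R] once composed with it. *)
Definition clamp (r y : R) : R := (Rabs (y + r) - Rabs (y - r)) / 2.

Lemma clamp_bound r y : 0 <= r -> Rabs (clamp r y) <= r.
Proof.
intros Hr. unfold clamp. apply Rabs_le.
destruct (Rle_dec 0 (y + r)), (Rle_dec 0 (y - r));
  [rewrite (Rabs_pos_eq (y + r)), (Rabs_pos_eq (y - r)) by lra
  |rewrite (Rabs_pos_eq (y + r)), (Rabs_left (y - r)) by lra
  |rewrite (Rabs_left (y + r)), (Rabs_pos_eq (y - r)) by lra
  |rewrite (Rabs_left (y + r)), (Rabs_left (y - r)) by lra]; lra.
Qed.

Lemma clamp_id r y : Rabs y <= r -> clamp r y = y.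
Proof.
intros Hy. apply Rabs_le_between in Hy. unfold clamp.
rewrite Rabs_pos_eq, Rabs_left1 by lra. field.
Qed.

Lemma continuity_pt_clamp_comp (h : R -> R) r y :
  0 <= r ->
  (forall x, Rabs x <= r ->
     filterlim h (within (fun z => Rabs z <= r) (locally x)) (locally (h x))) ->
  continuity_pt (fun z => h (clamp r z)) y.
Proof.
intros Hr Hh. apply continuity_pt_filterlim.
eapply filterlim_comp; [|apply Hh, clamp_bound, Hr].
intros P HP.
assert (Hclamp : continuity_pt (clamp r) y) by (unfold clamp; reg).
apply (proj1 (continuity_pt_filterlim _ _) Hclamp) in HP. unfold filtermap in *.
eapply filter_imp; [|exact HP]. intros z Hz. apply Hz, clamp_bound, Hr.
Qed.

Lemma continuity_2d_pt_comp (h u v : R -> R -> R) y t :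
  continuity_2d_pt u y t -> continuity_2d_pt v y t ->
  continuity_2d_pt h (u y t) (v y t) ->
  continuity_2d_pt (fun a b => h (u a b) (v a b)) y t.
Proof.
rewrite !continuity_2d_pt_filterlim. intros Hu Hv Hh.
apply (continuous_comp_2 (fun z : R * R => u (fst z) (snd z))
  (fun z : R * R => v (fst z) (snd z)) h (y, t)); auto.
Qed.

Lemma continuity_2d_pt_section (k : R -> R -> R) a s :
  continuity_2d_pt k a s -> continuity_pt (k a) s.
Proof.
rewrite continuity_2d_pt_filterlim. intros H. apply continuity_pt_filterlim.
apply (continuous_comp_2 (fun _ : R => a) (fun s : R => s) k s); auto.
- apply continuous_const.
- apply continuous_id.
Qed.

Lemma ex_RInt_continuity_pt (h : R -> R) a b :
  (forall s, continuity_pt h s) -> ex_RInt h a b.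
Proof.
intros H. apply (ex_RInt_continuous (V := R_CompleteNormedModule)).
intros z _. apply continuity_pt_filterlim, H.
Qed.

Lemma abs_RInt_0_le (h : R -> R) t M :
  (forall s, continuity_pt h s) ->
  (forall s, Rabs s <= Rabs t -> Rabs (h s) <= M) ->
  Rabs (RInt h 0 t) <= Rabs t * M.
Proof.
intros Hc Hb.
destruct (Rle_dec 0 t) as [Ht|Ht].
- rewrite (Rabs_pos_eq t) by lra. replace t with (t - 0) at 2 by ring.
  apply abs_RInt_le_const; [lra | apply ex_RInt_continuity_pt; auto |].
  intros s Hs. apply Hb. rewrite !Rabs_pos_eq; lra.
- rewrite <- (opp_RInt_swap h t 0) by (apply ex_RInt_continuity_pt; auto).
  change (Rabs (- RInt h t 0) <= Rabs t * M).
  rewrite Rabs_Ropp, (Rabs_left t), <- (Rminus_0_l t) by lra.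
  apply abs_RInt_le_const; [lra | apply ex_RInt_continuity_pt; auto |].
  intros s Hs. apply Hb. rewrite (Rabs_left t) by lra. apply Rabs_le; lra.
Qed.

Lemma continuity_2d_pt_RInt_param (k : R -> R -> R) a0 t0 :
  (forall a s, continuity_2d_pt k a s) ->
  continuity_2d_pt (fun a t => RInt (k a) 0 t) a0 t0.
Proof.
intros Hk eps.
assert (Hsec : forall a s, continuity_pt (k a) s)
  by (intros; apply continuity_2d_pt_section, Hk).
set (T := Rabs t0 + 1).
assert (HT : 0 < T) by (unfold T; pose proof (Rabs_pos t0); lra).
assert (He : 0 < eps / (2 * T)) by (pose proof (cond_pos eps); apply Rdiv_lt_0_compat; lra).
destruct (uniform_continuity_2d k (a0 - 1) (a0 + 1) (- T) T
  (fun a s _ _ => Hk a s) (mkposreal _ He)) as [d1 Hd1].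
assert (Hprim : continuity_pt (fun t => RInt (k a0) 0 t) t0).
{ apply continuity_pt_filterlim.
  apply (continuous_RInt_1 (k a0) 0 t0 (fun t => RInt (k a0) 0 t)).
  apply filter_forall. intros t.
  apply (RInt_correct (V := R_CompleteNormedModule)), ex_RInt_continuity_pt, Hsec. }
assert (He2 : 0 < eps / 2) by (pose proof (cond_pos eps); lra).
destruct (Hprim (eps / 2) He2) as [d2 [Hd2 Hprim_close]].
assert (Hd : 0 < Rmin d1 (Rmin d2 1))
  by (apply Rmin_pos; [apply cond_pos | apply Rmin_pos; lra]).
exists (mkposreal _ Hd). simpl. intros a t Ha Ht.
pose proof (Rmin_l d1 (Rmin d2 1)). pose proof (Rmin_r d1 (Rmin d2 1)).
pose proof (Rmin_l d2 1). pose proof (Rmin_r d2 1).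
assert (Hta : Rabs t < T).
{ unfold T. pose proof (Rabs_triang_inv t t0). lra. }
assert (Hparam : Rabs (RInt (k a) 0 t - RInt (k a0) 0 t) <= Rabs t * (eps / (2 * T))).
{ rewrite <- (RInt_minus (k a) (k a0)) by (apply ex_RInt_continuity_pt; auto).
  apply abs_RInt_0_le.
  - intros s. apply continuity_pt_minus; auto.
  - intros s Hs. left. apply (Hd1 a0 s a s).
    + lra.
    + apply Rabs_le_between. lra.
    + apply Rabs_lt_between in Ha. lra.
    + apply Rabs_le_between. lra.
    + lra.
    + rewrite Rminus_diag, Rabs_R0. apply cond_pos. }
assert (Hbound : Rabs (RInt (k a0) 0 t - RInt (k a0) 0 t0) < eps / 2).
{ destruct (Req_dec t t0) as [->|Hne].
  - rewrite Rminus_diag, Rabs_R0. lra.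
  - apply Hprim_close. split; [split; [exact I | auto] | simpl; unfold R_dist; lra]. }
assert (Hsmall : Rabs t * (eps / (2 * T)) < eps / 2).
{ apply Rlt_le_trans with (T * (eps / (2 * T))).
  - apply Rmult_lt_compat_r; auto.
  - right. field. lra. }
replace (RInt (k a) 0 t - RInt (k a0) 0 t0) with
  ((RInt (k a) 0 t - RInt (k a0) 0 t) + (RInt (k a0) 0 t - RInt (k a0) 0 t0)) by ring.
pose proof (Rabs_triang (RInt (k a) 0 t - RInt (k a0) 0 t)
  (RInt (k a0) 0 t - RInt (k a0) 0 t0)). lra.
Qed.

Definition duhamel (b : R -> R) (N : R -> R -> R) (c y t : R) : R :=
  b (y + c * t) + RInt (fun s => N (y + c * (t - s)) s) 0 t.

Definition in_cone (r y t : R) : Prop := 0 <= t /\ Rabs y + t < r.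

Lemma in_cone_characteristic r c y t s :
  Rabs c <= 1 -> in_cone r y t -> 0 <= s <= t -> in_cone r (y + c * (t - s)) s.
Proof.
intros Hc [Ht Hyt] Hs. split; [lra|].
pose proof (Rabs_triang y (c * (t - s))) as Htri.
rewrite Rabs_mult, (Rabs_pos_eq (t - s)) in Htri by lra.
assert (Rabs c * (t - s) <= t - s)
  by (rewrite <- (Rmult_1_l (t - s)) at 2; apply Rmult_le_compat_r; lra).
lra.
Qed.

Lemma in_cone_foot r c y t : Rabs c <= 1 -> in_cone r y t -> Rabs (y + c * t) < r.
Proof.
intros Hc Hyt. destruct Hyt as [Ht Hr].
destruct (in_cone_characteristic r c y t 0 Hc (conj Ht Hr)) as [_ H]; [lra|].
rewrite Rminus_0_r in H. lra.
Qed.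

Lemma Rabs_pm1_le1 : Rabs 1 <= 1 /\ Rabs (-1) <= 1.
Proof. split; apply Rabs_le; lra. Qed.

Lemma duhamel_ext_cone r c b b' N N' y t :
  Rabs c <= 1 ->
  (forall z, Rabs z < r -> b z = b' z) ->
  (forall z s, in_cone r z s -> N z s = N' z s) ->
  in_cone r y t -> duhamel b N c y t = duhamel b' N' c y t.
Proof.
intros Hc Hb HN Hyt. unfold duhamel. f_equal.
- apply Hb, in_cone_foot; auto.
- apply RInt_ext. destruct Hyt as [Ht Hr].
  rewrite Rmin_left, Rmax_right by lra. intros s Hs.
  apply HN, in_cone_characteristic; [auto | split; auto | lra].
Qed.

Lemma duhamel_continuity_2d_pt b N c y t :
  (forall z, continuity_pt b z) -> (forall z s, continuity_2d_pt N z s) ->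
  continuity_2d_pt (duhamel b N c) y t.
Proof.
intros Hb HN. unfold duhamel.
apply continuity_2d_pt_plus.
- apply (continuity_1d_2d_pt_comp b (fun a t => a + c * t)); [apply Hb|].
  apply continuity_2d_pt_plus; [apply continuity_2d_pt_id1|].
  apply continuity_2d_pt_mult; [apply continuity_2d_pt_const | apply continuity_2d_pt_id2].
- set (K := fun a t => RInt (fun s => N (a - c * s) s) 0 t).
  apply continuity_2d_pt_ext with (f := fun y t => K (y + c * t) t).
  { intros a u. unfold K. apply RInt_ext. intros s _. f_equal. ring. }
  apply (continuity_2d_pt_comp K (fun a t => a + c * t) (fun _ t => t)).
  + apply continuity_2d_pt_plus; [apply continuity_2d_pt_id1|].
    apply continuity_2d_pt_mult; [apply continuity_2d_pt_const | apply continuity_2d_pt_id2].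
  + apply continuity_2d_pt_id2.
  + apply (continuity_2d_pt_RInt_param (fun a s => N (a - c * s) s)).
    intros a s. apply (continuity_2d_pt_comp N (fun a s => a - c * s) (fun _ s => s)).
    * apply continuity_2d_pt_minus; [apply continuity_2d_pt_id1|].
      apply continuity_2d_pt_mult; [apply continuity_2d_pt_const | apply continuity_2d_pt_id2].
    * apply continuity_2d_pt_id2.
    * apply HN.
Qed.

Lemma ex_RInt_characteristic N c y t a b :
  (forall z s, continuity_2d_pt N z s) -> ex_RInt (fun s => N (y + c * (t - s)) s) a b.
Proof.
intros HN. apply ex_RInt_continuity_pt. intros s.
apply (continuity_2d_pt_section (fun _ s => N (y + c * (t - s)) s) 0).
apply (continuity_2d_pt_comp N (fun _ s => y + c * (t - s)) (fun _ s => s)).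
- apply continuity_2d_pt_plus; [apply continuity_2d_pt_const|].
  apply continuity_2d_pt_mult; [apply continuity_2d_pt_const|].
  apply continuity_2d_pt_minus; [apply continuity_2d_pt_const | apply continuity_2d_pt_id2].
- apply continuity_2d_pt_id2.
- apply HN.
Qed.

Lemma duhamel_split b (N : R -> R -> R) c y t tau :
  ex_RInt (fun s => N (y + c * (t - s)) s) 0 t -> 0 <= tau <= t ->
  duhamel b N c y t =
  duhamel b N c (y + c * (t - tau)) tau + RInt (fun s => N (y + c * (t - s)) s) tau t.
Proof.
intros Hint Htau. unfold duhamel.
rewrite <- (RInt_Chasles _ 0 tau t);
  [| eapply ex_RInt_Chasles_1; [|exact Hint]; lra
   | eapply ex_RInt_Chasles_2; [|exact Hint]; lra].
change (plus ?u ?v) with (u + v).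
replace (y + c * (t - tau) + c * tau) with (y + c * t) by ring.
rewrite Rplus_assoc. f_equal. f_equal.
apply RInt_ext. intros s _. f_equal. ring.
Qed.

Lemma duhamel_lower_bound r c b (N : R -> R -> R) y t tau beta kappa :
  Rabs c <= 1 ->
  (forall z u, in_cone r z u -> ex_RInt (fun s => N (z + c * (u - s)) s) 0 u) ->
  (forall z, in_cone r z tau -> beta <= duhamel b N c z tau) ->
  (forall z s, in_cone r z s -> tau <= s -> kappa <= N z s) ->
  in_cone r y t -> 0 <= tau <= t ->
  beta + (t - tau) * kappa <= duhamel b N c y t.
Proof.
intros Hc Hint Hbeta Hkappa Hyt Htau.
rewrite (duhamel_split b N c y t tau (Hint y t Hyt) Htau).
apply Rplus_le_compat.
- apply Hbeta, in_cone_characteristic; auto.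
- replace ((t - tau) * kappa) with (RInt (fun _ => kappa) tau t)
    by (rewrite RInt_const; reflexivity).
  apply RInt_le; [lra | apply ex_RInt_const | |].
  + apply (ex_RInt_Chasles_2 (V := R_CompleteNormedModule) _ 0); [lra | exact (Hint y t Hyt)].
  + intros s Hs. apply Hkappa; [apply in_cone_characteristic; auto; lra | lra].
Qed.

Lemma iterates_S p mu g1 g2 f g m y t :
  let N := Nl p mu (phi_n p mu g1 g2 f g m) (psi_n p mu g1 g2 f g m) in
  phi_n p mu g1 g2 f g (S m) y t = duhamel f N 1 y t /\
  psi_n p mu g1 g2 f g (S m) y t = duhamel g N (-1) y t.
Proof.
unfold duhamel, phi_n, psi_n. split; simpl; f_equal;
  solve [f_equal; ring | apply RInt_ext; intros s _; f_equal; ring].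
Qed.

(* [Nl] with [s] replaced by [Rabs s] in the damping: it agrees with [Nl] for
   [s >= 0] and has no pole at [s = -1], so its iterates are continuous on the
   whole plane. *)
Definition Nl_abs (p mu : R) (ph ps : R -> R -> R) (y s : R) : R :=
  Rpower 2 (- p) * powabs (ph y s + ps y s) p
  - mu / (1 + Rabs s) * ((ph y s + ps y s) / 2).

Fixpoint iterates_abs (p mu g1 g2 : R) (f g : R -> R) (n : nat)
  : (R -> R -> R) * (R -> R -> R) :=
  match n with
  | O => (fun _ _ => g1, fun _ _ => g2)
  | S m =>
      let pr := iterates_abs p mu g1 g2 f g m in
      let N := Nl_abs p mu (fst pr) (snd pr) in
      (duhamel f N 1, duhamel g N (-1))
  end.

Lemma Nl_abs_continuity_2d_pt p mu ph ps y s :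
  0 < p ->
  (forall y s, continuity_2d_pt ph y s) -> (forall y s, continuity_2d_pt ps y s) ->
  continuity_2d_pt (Nl_abs p mu ph ps) y s.
Proof.
intros Hp Hph Hps. unfold Nl_abs.
assert (Hsum : continuity_2d_pt (fun u v => ph u v + ps u v) y s)
  by (apply continuity_2d_pt_plus; auto).
apply continuity_2d_pt_minus; apply continuity_2d_pt_mult.
- apply continuity_2d_pt_const.
- apply (continuity_1d_2d_pt_comp (fun u => powabs u p)); auto.
  apply powabs_continuity_pt, Hp.
- apply (continuity_1d_2d_pt_comp (fun v => mu / (1 + Rabs v)) (fun _ v => v));
    [| apply continuity_2d_pt_id2].
  pose proof (Rabs_pos s).
  apply continuity_pt_div; [apply continuity_pt_const; intros ? ?; auto | | lra].
  apply continuity_pt_plus; [apply continuity_pt_const; intros ? ?; auto | apply Rcontinuity_abs].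
- apply (continuity_1d_2d_pt_comp (fun v => v / 2)); auto. reg.
Qed.

Lemma iterates_abs_continuity_2d_pt p mu g1 g2 f g n y t :
  0 < p -> (forall z, continuity_pt f z) -> (forall z, continuity_pt g z) ->
  continuity_2d_pt (fst (iterates_abs p mu g1 g2 f g n)) y t /\
  continuity_2d_pt (snd (iterates_abs p mu g1 g2 f g n)) y t.
Proof.
intros Hp Hf Hg. revert y t. induction n as [|n IH]; intros y t.
- split; simpl; apply continuity_2d_pt_const.
- assert (HN : forall z s, continuity_2d_pt
    (Nl_abs p mu (fst (iterates_abs p mu g1 g2 f g n)) (snd (iterates_abs p mu g1 g2 f g n))) z s)
    by (intros; apply Nl_abs_continuity_2d_pt; [exact Hp | apply IH | apply IH]).
  split; apply duhamel_continuity_2d_pt; auto.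
Qed.

Lemma iterates_abs_clamp_eq p mu g1 g2 f g r n y t :
  in_cone r y t ->
  fst (iterates_abs p mu g1 g2 (fun z => f (clamp r z)) (fun z => g (clamp r z)) n) y t
    = phi_n p mu g1 g2 f g n y t /\
  snd (iterates_abs p mu g1 g2 (fun z => f (clamp r z)) (fun z => g (clamp r z)) n) y t
    = psi_n p mu g1 g2 f g n y t.
Proof.
revert y t. induction n as [|n IH]; intros y t Hyt; [split; reflexivity|].
destruct (iterates_S p mu g1 g2 f g n y t) as [-> ->].
assert (HN : forall z s, in_cone r z s ->
  Nl_abs p mu (fst (iterates_abs p mu g1 g2 (fun z => f (clamp r z)) (fun z => g (clamp r z)) n))
              (snd (iterates_abs p mu g1 g2 (fun z => f (clamp r z)) (fun z => g (clamp r z)) n)) z s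
  = Nl p mu (phi_n p mu g1 g2 f g n) (psi_n p mu g1 g2 f g n) z s).
{ intros z s Hzs. destruct (IH z s Hzs) as [E1 E2].
  unfold Nl_abs, Nl. rewrite E1, E2, (Rabs_pos_eq s) by apply Hzs. reflexivity. }
assert (Hclamp : forall (h : R -> R) z, Rabs z < r -> h (clamp r z) = h z)
  by (intros h z Hz; rewrite clamp_id by lra; reflexivity).
split; apply (duhamel_ext_cone r); auto; apply Rabs_pm1_le1.
Qed.

Lemma ex_RInt_Nl_iterates p mu g1 g2 f g r n c y t :
  0 < p -> 0 <= r -> Rabs c <= 1 ->
  (forall x, Rabs x <= r ->
     filterlim f (within (fun z => Rabs z <= r) (locally x)) (locally (f x))) ->
  (forall x, Rabs x <= r ->
     filterlim g (within (fun z => Rabs z <= r) (locally x)) (locally (g x))) ->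
  in_cone r y t ->
  ex_RInt (fun s => Nl p mu (phi_n p mu g1 g2 f g n) (psi_n p mu g1 g2 f g n)
                       (y + c * (t - s)) s) 0 t.
Proof.
intros Hp Hr Hc Hf Hg Hyt.
set (pr := iterates_abs p mu g1 g2 (fun z => f (clamp r z)) (fun z => g (clamp r z)) n).
apply ex_RInt_ext with (f := fun s => Nl_abs p mu (fst pr) (snd pr) (y + c * (t - s)) s).
- destruct Hyt as [Ht Hr'].
  rewrite Rmin_left, Rmax_right by lra. intros s Hs.
  assert (Hzs : in_cone r (y + c * (t - s)) s)
    by (apply in_cone_characteristic; [auto | split; auto | lra]).
  destruct (iterates_abs_clamp_eq p mu g1 g2 f g r n _ _ Hzs) as [E1 E2].
  unfold Nl_abs, Nl. fold pr in E1, E2. rewrite E1, E2, (Rabs_pos_eq s) by lra. reflexivity.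
- apply ex_RInt_characteristic. intros z s.
  apply Nl_abs_continuity_2d_pt; [exact Hp | |]; intros;
    apply iterates_abs_continuity_2d_pt; auto; intros; apply continuity_pt_clamp_comp; auto.
Qed.

Definition reaction (p mu A : R) : R := Rpower 2 (- p) * Rpower A p - mu / 2 * A.

Lemma Rpower_pos x y : 0 < Rpower x y.
Proof. apply exp_pos. Qed.

Lemma reaction_factor p mu A :
  0 < A -> reaction p mu A = A * (Rpower 2 (- p) * Rpower A (p - 1) - mu / 2).
Proof.
intros HA. unfold reaction.
replace p with (1 + (p - 1)) at 2 by ring. rewrite Rpower_plus, Rpower_1 by exact HA. ring.
Qed.

Section ReactionAboveThreshold.

Variables (p mu G : R).
Hypotheses (Hp : 1 < p) (HG : 0 < G)
  (Hthreshold : mu / 2 <= Rpower 2 (- p) * Rpower G (p - 1)).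

Lemma reaction_factor_le A B :
  G <= A <= B ->
  Rpower 2 (- p) * Rpower A (p - 1) - mu / 2 <= Rpower 2 (- p) * Rpower B (p - 1) - mu / 2.
Proof.
intros HAB. pose proof (Rpower_pos 2 (- p)).
assert (Rpower A (p - 1) <= Rpower B (p - 1)) by (apply Rle_Rpower_l; lra).
nra.
Qed.

Lemma reaction_ge0 A : G <= A -> 0 <= reaction p mu A.
Proof.
intros HA. rewrite reaction_factor by lra.
pose proof (reaction_factor_le G A (conj (Rle_refl G) HA)). nra.
Qed.

Lemma reaction_le A B : G <= A <= B -> reaction p mu A <= reaction p mu B.
Proof.
intros HAB. rewrite !reaction_factor by lra.
pose proof (reaction_factor_le G A (conj (Rle_refl G) (proj1 HAB))).
pose proof (reaction_factor_le A B HAB). nra.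
Qed.

End ReactionAboveThreshold.

Lemma reaction_le_Nl p mu ph ps y s :
  0 < mu -> 0 <= s -> 0 < ph y s + ps y s ->
  reaction p mu (ph y s + ps y s) <= Nl p mu ph ps y s.
Proof.
intros Hmu Hs Hu. unfold reaction, Nl, powabs.
rewrite Rabs_pos_eq by lra. destruct (Rlt_dec 0 (ph y s + ps y s)); [|lra].
assert (mu / (1 + s) <= mu).
{ unfold Rdiv. rewrite <- (Rmult_1_r mu) at 2. apply Rmult_le_compat_l; [lra|].
  rewrite <- Rinv_1. apply Rinv_le_contravar; lra. }
nra.
Qed.

Fixpoint stair_time (d : nat -> R) (k : nat) : R :=
  match k with O => 0 | S j => stair_time d j + d j end.

Section Staircase.

Variables (p mu g1 g2 r : R) (f g : R -> R).
Hypotheses (Hp : 1 < p) (Hmu : 0 < mu) (Hg1 : 0 < g1) (Hg2 : 0 < g2)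
  (Hthreshold : mu / 2 <= Rpower 2 (- p) * Rpower (g1 + g2) (p - 1))
  (Hdata : forall x, Rabs x < r -> g1 <= f x /\ g2 <= g x)
  (Hint : forall n c y t, Rabs c <= 1 -> in_cone r y t ->
     ex_RInt (fun s => Nl p mu (phi_n p mu g1 g2 f g n) (psi_n p mu g1 g2 f g n)
                          (y + c * (t - s)) s) 0 t).

Local Notation phi := (phi_n p mu g1 g2 f g).
Local Notation psi := (psi_n p mu g1 g2 f g).

Definition iterates_above (n : nat) (E tau : R) : Prop :=
  forall y t, in_cone r y t -> tau <= t -> g1 + E <= phi n y t /\ g2 + E <= psi n y t.

Lemma reaction_le_Nl_above n E tau :
  0 <= E -> iterates_above n E tau ->
  forall z s, in_cone r z s -> tau <= s ->
  reaction p mu (g1 + g2 + 2 * E) <= Nl p mu (phi n) (psi n) z s.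
Proof.
intros HE Habove z s Hzs Hs. destruct (Habove z s Hzs Hs).
apply Rle_trans with (reaction p mu (phi n z s + psi n z s)).
- apply (reaction_le p mu (g1 + g2)); lra.
- apply reaction_le_Nl; [exact Hmu | apply Hzs | lra].
Qed.

Lemma iterate_lower_bound n c b y t tau beta kappa :
  Rabs c <= 1 ->
  (forall z, in_cone r z tau -> beta <= duhamel b (Nl p mu (phi n) (psi n)) c z tau) ->
  (forall z s, in_cone r z s -> tau <= s -> kappa <= Nl p mu (phi n) (psi n) z s) ->
  in_cone r y t -> 0 <= tau <= t ->
  beta + (t - tau) * kappa <= duhamel b (Nl p mu (phi n) (psi n)) c y t.
Proof.
intros Hc. apply (duhamel_lower_bound r); [exact Hc|].
intros z u. apply Hint, Hc.
Qed.

Lemma iterates_above_zero n : iterates_above n 0 0.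
Proof.
induction n as [|n IH]; intros y t Hyt _.
- unfold phi_n, psi_n. simpl. lra.
- assert (HN : forall z s, in_cone r z s -> 0 <= s -> 0 <= Nl p mu (phi n) (psi n) z s).
  { intros z s Hzs Hs. apply Rle_trans with (reaction p mu (g1 + g2 + 2 * 0)).
    - apply (reaction_ge0 p mu (g1 + g2)); lra.
    - apply (reaction_le_Nl_above n 0 0); auto; lra. }
  assert (Hstart : forall b c z, duhamel b (Nl p mu (phi n) (psi n)) c z 0 = b z).
  { intros b c z. unfold duhamel. rewrite RInt_point.
    replace (z + c * 0) with z by ring. apply Rplus_0_r. }
  destruct Rabs_pm1_le1 as [H1 Hm1]. destruct Hyt as [Ht Hyt].
  destruct (iterates_S p mu g1 g2 f g n y t) as [-> ->].
  split; [apply Rle_trans with (g1 + (t - 0) * 0) | apply Rle_trans with (g2 + (t - 0) * 0)];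
    try lra; apply iterate_lower_bound; try assumption; try (split; lra);
    intros z Hz; rewrite Hstart; apply Hdata; destruct Hz; lra.
Qed.

Lemma iterates_above_S n E tau d :
  0 <= E -> 0 <= tau -> 0 <= d ->
  iterates_above n E tau -> iterates_above (S n) E tau ->
  iterates_above (S n) (E + d * reaction p mu (g1 + g2 + 2 * E)) (tau + d).
Proof.
intros HE Htau Hd Hn HSn y t Hyt Ht.
set (F := reaction p mu (g1 + g2 + 2 * E)).
assert (HF : 0 <= F) by (apply (reaction_ge0 p mu (g1 + g2)); lra).
assert (Hgain : d * F <= (t - tau) * F) by (apply Rmult_le_compat_r; lra).
assert (HN := reaction_le_Nl_above n E tau HE Hn).
destruct Rabs_pm1_le1 as [H1 Hm1].
destruct (iterates_S p mu g1 g2 f g n y t) as [-> ->].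
split.
- apply Rle_trans with (g1 + E + (t - tau) * F); [lra|].
  apply iterate_lower_bound; [exact H1 | | exact HN | exact Hyt | lra].
  intros z Hz. rewrite <- (proj1 (iterates_S p mu g1 g2 f g n z tau)).
  apply (HSn z tau Hz); lra.
- apply Rle_trans with (g2 + E + (t - tau) * F); [lra|].
  apply iterate_lower_bound; [exact Hm1 | | exact HN | exact Hyt | lra].
  intros z Hz. rewrite <- (proj2 (iterates_S p mu g1 g2 f g n z tau)).
  apply (HSn z tau Hz); lra.
Qed.

Lemma staircase (A d : nat -> R) :
  A O = g1 + g2 -> (forall k, g1 + g2 <= A k) -> (forall k, 0 <= d k) ->
  (forall k, A (S k) = A k + 2 * d k * reaction p mu (A k)) ->
  forall k, exists n, forall m, (n <= m)%nat ->
    iterates_above m ((A k - (g1 + g2)) / 2) (stair_time d k).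
Proof.
intros HA0 HA Hd HAS.
assert (Hstair : forall k, 0 <= stair_time d k)
  by (induction k; simpl; [lra | pose proof (Hd k); lra]).
induction k as [|k [n IH]].
- exists O. intros m _. rewrite HA0. replace ((g1 + g2 - (g1 + g2)) / 2) with 0 by field.
  apply iterates_above_zero.
- exists (S n). intros [|m] Hm; [lia|]. simpl.
  replace ((A (S k) - (g1 + g2)) / 2) with
    ((A k - (g1 + g2)) / 2 + d k * reaction p mu (g1 + g2 + 2 * ((A k - (g1 + g2)) / 2))).
  + apply iterates_above_S; auto; [pose proof (HA k); lra | apply IH; lia | apply IH; lia].
  + rewrite HAS. replace (g1 + g2 + 2 * ((A k - (g1 + g2)) / 2)) with (A k) by field. field.
Qed.

End Staircase.

Definition damping_ratio (p mu A : R) : R := mu / 2 * A / (Rpower 2 (- p) * Rpower A p).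

(* Blow-up time of the comparison ODE [A' = 2 reaction A] started at [A]. *)
Definition ode_blowup_time (p mu A : R) : R :=
  / ((p - 1) * mu) *
  ln ((Rpower 2 (1 - p) / mu) / (Rpower 2 (1 - p) / mu - Rpower A (1 - p))).

Lemma T1_eq_ode_blowup_time p mu g1 g2 : T1 p mu g1 g2 = ode_blowup_time p mu (g1 + g2).
Proof. reflexivity. Qed.

Lemma reaction_eq_ratio p mu A :
  0 < A -> reaction p mu A = Rpower 2 (- p) * Rpower A p * (1 - damping_ratio p mu A).
Proof.
intros HA. unfold reaction, damping_ratio.
pose proof (Rpower_pos 2 (- p)). pose proof (Rpower_pos A p). field. lra.
Qed.

Lemma damping_ratio_pos p mu A : 0 < mu -> 0 < A -> 0 < damping_ratio p mu A.
Proof.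
intros Hmu HA. unfold damping_ratio.
pose proof (Rpower_pos 2 (- p)). pose proof (Rpower_pos A p).
apply Rdiv_lt_0_compat; nra.
Qed.

Lemma damping_ratio_lt_1 p mu A : 0 < A -> 0 < reaction p mu A -> damping_ratio p mu A < 1.
Proof.
intros HA HF. rewrite reaction_eq_ratio in HF by exact HA.
pose proof (Rpower_pos 2 (- p)). pose proof (Rpower_pos A p).
assert (0 < Rpower 2 (- p) * Rpower A p) by nra. nra.
Qed.

Lemma Rpower_exp_l x y : Rpower (exp x) y = exp (y * x).
Proof. unfold Rpower. rewrite ln_exp. reflexivity. Qed.

Lemma damping_ratio_mul_exp p mu A e :
  0 < A -> damping_ratio p mu (A * exp e) = exp (- (p - 1) * e) * damping_ratio p mu A.
Proof.
intros HA. unfold damping_ratio.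
rewrite <- Rpower_mult_distr, Rpower_exp_l by (auto; apply exp_pos).
replace (- (p - 1) * e) with (e + - (p * e)) by ring. rewrite exp_plus, exp_Ropp.
pose proof (Rpower_pos 2 (- p)). pose proof (Rpower_pos A p). pose proof (exp_pos (p * e)).
field. lra.
Qed.

Lemma damping_ratio_antitone p mu G A :
  1 < p -> 0 < mu -> 0 < G <= A -> damping_ratio p mu A <= damping_ratio p mu G.
Proof.
intros Hp Hmu HGA.
assert (Hsplit : forall B, 0 < B ->
  damping_ratio p mu B = mu / 2 / (Rpower 2 (- p) * Rpower B (p - 1))).
{ intros B HB. unfold damping_ratio.
  replace p with (1 + (p - 1)) at 2 by ring. rewrite Rpower_plus, Rpower_1 by exact HB.
  pose proof (Rpower_pos 2 (- p)). pose proof (Rpower_pos B (p - 1)). field. lra. }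
rewrite !Hsplit by lra.
pose proof (Rpower_pos 2 (- p)). pose proof (Rpower_pos G (p - 1)).
assert (Rpower G (p - 1) <= Rpower A (p - 1)) by (apply Rle_Rpower_l; lra).
unfold Rdiv. apply Rmult_le_compat_l; [lra|].
apply Rinv_le_contravar; nra.
Qed.

Lemma ode_blowup_time_eq p mu A :
  0 < mu -> 0 < A -> damping_ratio p mu A < 1 ->
  ode_blowup_time p mu A = - ln (1 - damping_ratio p mu A) / ((p - 1) * mu).
Proof.
intros Hmu HA Hz. pose proof (damping_ratio_pos p mu A Hmu HA).
unfold ode_blowup_time.
replace (Rpower 2 (1 - p) / mu / (Rpower 2 (1 - p) / mu - Rpower A (1 - p)))
  with (/ (1 - damping_ratio p mu A)).
{ rewrite ln_Rinv by lra. unfold Rdiv. ring. }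
assert (Hpow : forall x, 0 < x -> Rpower x (1 - p) = x * / Rpower x p).
{ intros x Hx. replace (1 - p) with (1 + - p) by ring.
  rewrite Rpower_plus, Rpower_1, Rpower_Ropp by exact Hx. reflexivity. }
rewrite !Hpow by lra.
assert (Hdiff : 2 * / Rpower 2 p / mu - A * / Rpower A p
                = 2 * / Rpower 2 p / mu * (1 - damping_ratio p mu A)).
{ unfold damping_ratio. rewrite Rpower_Ropp.
  pose proof (Rpower_pos 2 p). pose proof (Rpower_pos A p). field. lra. }
rewrite Hdiff. pose proof (Rpower_pos 2 p). field. lra.
Qed.

Lemma ode_blowup_time_ge0 p mu A :
  1 < p -> 0 < mu -> 0 < A -> damping_ratio p mu A < 1 -> 0 <= ode_blowup_time p mu A.
Proof.
intros Hp Hmu HA Hz. pose proof (damping_ratio_pos p mu A Hmu HA).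
rewrite ode_blowup_time_eq by assumption.
assert (ln (1 - damping_ratio p mu A) <= 0) by (rewrite <- ln_1; apply ln_le; lra).
apply Rmult_le_pos; [lra | left; apply Rinv_0_lt_compat; nra].
Qed.

Lemma exp_le_1 x : x <= 0 -> exp x <= 1.
Proof.
intros [Hx | ->]; [left; rewrite <- exp_0; apply exp_increasing, Hx | rewrite exp_0; lra].
Qed.

Lemma ln_ge_1_minus_inv x : 0 < x -> 1 - / x <= ln x.
Proof.
intros Hx. pose proof (exp_ineq1_le (ln (/ x))).
rewrite exp_ln, ln_Rinv in H by (try apply Rinv_0_lt_compat; auto). lra.
Qed.

(* A Bernoulli-type inequality, [q^p - q >= (p - 1) (q - 1)] for [q = exp e]. *)
Lemma exp_bernoulli p e :
  1 <= p -> 0 <= e -> (p - 1) * (exp e - 1) <= exp (p * e) * (1 - exp (- (p - 1) * e)).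
Proof.
intros Hp He.
assert (Hsplit : exp (p * e) * (1 - exp (- (p - 1) * e)) = exp e * (exp ((p - 1) * e) - 1)).
{ rewrite !Rmult_minus_distr_l, <- !exp_plus, !Rmult_1_r.
  replace (p * e + - (p - 1) * e) with e by ring.
  replace (e + (p - 1) * e) with (p * e) by ring. reflexivity. }
rewrite Hsplit.
pose proof (exp_ineq1_le ((p - 1) * e)). pose proof (exp_ineq1_le (- e)).
assert (Hinv : exp (- e) * exp e = 1) by (rewrite <- exp_plus, Rplus_opp_l; apply exp_0).
pose proof (exp_pos e).
assert (exp e - 1 <= e * exp e) by nra.
assert (0 <= p - 1) by lra.
nra.
Qed.

(* The factor by which the staircase of time steps overshoots the blow-up time of the
   ODE; it tends to 1 with the step [e]. *)
Definition slack (p kappa e : R) : R := exp (p * e) * (1 + (1 - exp (- (p - 1) * e)) * kappa).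

Lemma slack_mul_lt p kappa T Ts :
  0 <= T < Ts -> exists e, 0 < e /\ slack p kappa e * T < Ts.
Proof.
intros HT.
assert (Hcont : continuity_pt (fun e => slack p kappa e * T) 0) by (unfold slack; reg).
destruct (Hcont (Ts - T)) as [d [Hd Hclose]]; [lra|].
exists (d / 2). split; [lra|].
assert (Hs0 : slack p kappa 0 = 1).
{ unfold slack. rewrite Rmult_0_r, Rmult_0_r, exp_0. ring. }
specialize (Hclose (d / 2)). simpl in Hclose. unfold R_dist in Hclose.
rewrite Hs0, Rmult_1_l, Rminus_0_r, Rabs_pos_eq in Hclose by lra.
assert (Hnear : Rabs (slack p kappa (d / 2) * T - T) < Ts - T)
  by (apply Hclose; repeat split; lra).
apply Rabs_lt_between in Hnear. lra.
Qed.

Lemma ode_time_step p mu e z z0 :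
  1 < p -> 0 < mu -> 0 <= e -> 0 < z <= z0 -> z0 < 1 ->
  (exp e - 1) / mu * (z / (1 - z)) <=
  slack p (z0 / (1 - z0)) e / ((p - 1) * mu) *
  (ln (1 - exp (- (p - 1) * e) * z) - ln (1 - z)).
Proof.
intros Hp Hmu He Hz Hz0.
set (a := exp (- (p - 1) * e)). set (kappa := z0 / (1 - z0)).
assert (Ha : 0 < a <= 1).
{ split; [apply exp_pos|]. apply exp_le_1. nra. }
assert (Hkappa : z <= kappa * (1 - z)).
{ unfold kappa. apply Rmult_le_reg_r with (1 - z0); [lra|].
  field_simplify; nra. }
assert (Haz : 0 < 1 - a * z) by nra.
assert (Hgap := exp_bernoulli p e ltac:(lra) He). fold a in Hgap.
pose proof (exp_pos (p * e)).
assert (Hkappa0 : 0 <= kappa) by (unfold kappa; apply Rmult_le_pos; [lra | left; apply Rinv_0_lt_compat; lra]).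
assert (Hslack : 0 <= slack p kappa e).
{ unfold slack. fold a. apply Rmult_le_pos; [lra|].
  pose proof (Rmult_le_pos (1 - a) kappa ltac:(lra) Hkappa0). lra. }
assert (Hln : (1 - a) * z / (1 - a * z) <= ln (1 - a * z) - ln (1 - z)).
{ rewrite <- ln_div by lra. eapply Rle_trans; [|apply ln_ge_1_minus_inv, Rdiv_lt_0_compat; lra].
  right. field. lra. }
assert (Hkey : (exp e - 1) * (p - 1) * (1 - a * z) <= slack p kappa e * (1 - a) * (1 - z)).
{ unfold slack. fold a.
  assert (1 - a * z <= (1 + (1 - a) * kappa) * (1 - z)) by nra.
  assert (0 <= exp (p * e) * (1 - a)) by nra.
  nra. }
apply Rle_trans with (slack p kappa e / ((p - 1) * mu) * ((1 - a) * z / (1 - a * z))).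
- set (w := z / ((p - 1) * mu * (1 - z) * (1 - a * z))).
  assert (Hw : 0 <= w) by (unfold w; apply Rlt_le, Rdiv_lt_0_compat; [lra|];
    apply Rmult_lt_0_compat; [apply Rmult_lt_0_compat|]; nra).
  replace ((exp e - 1) / mu * (z / (1 - z))) with ((exp e - 1) * (p - 1) * (1 - a * z) * w)
    by (unfold w; field; repeat split; nra).
  replace (slack p kappa e / ((p - 1) * mu) * ((1 - a) * z / (1 - a * z)))
    with (slack p kappa e * (1 - a) * (1 - z) * w) by (unfold w; field; repeat split; nra).
  apply Rmult_le_compat_r; assumption.
- apply Rmult_le_compat_l; [apply Rmult_le_pos; [exact Hslack|]; left; apply Rinv_0_lt_compat; nra|].
  exact Hln.
Qed.

Lemma ode_blowup_time_drop p mu e G A :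
  1 < p -> 0 < mu -> 0 <= e -> 0 < G <= A -> 0 < reaction p mu G ->
  (exp e - 1) * A / (2 * reaction p mu A) <=
  slack p (damping_ratio p mu G / (1 - damping_ratio p mu G)) e *
  (ode_blowup_time p mu A - ode_blowup_time p mu (A * exp e)).
Proof.
intros Hp Hmu He HGA HFG.
pose proof (damping_ratio_pos p mu A Hmu ltac:(lra)).
assert (HzG : damping_ratio p mu G < 1) by (apply damping_ratio_lt_1; lra).
assert (HzA : damping_ratio p mu A <= damping_ratio p mu G) by (apply damping_ratio_antitone; lra).
assert (Ha : 0 < exp (- (p - 1) * e) <= 1) by (split; [apply exp_pos | apply exp_le_1; nra]).
assert (HAe : 0 < A * exp e) by (pose proof (exp_pos e); nra).
assert (HzAe : damping_ratio p mu (A * exp e) < 1)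
  by (rewrite damping_ratio_mul_exp by lra; nra).
rewrite (ode_blowup_time_eq p mu A), (ode_blowup_time_eq p mu (A * exp e)),
  damping_ratio_mul_exp by lra.
replace ((exp e - 1) * A / (2 * reaction p mu A))
  with ((exp e - 1) / mu * (damping_ratio p mu A / (1 - damping_ratio p mu A))).
- eapply Rle_trans; [apply (ode_time_step p mu e _ (damping_ratio p mu G)); auto; lra|].
  right. unfold Rdiv. ring.
- assert (HFA : 0 < 2 * reaction p mu A).
  { rewrite reaction_eq_ratio by lra.
    pose proof (Rpower_pos 2 (- p)). pose proof (Rpower_pos A p).
    apply Rmult_lt_0_compat; [lra|]. apply Rmult_lt_0_compat; [nra | lra]. }
  unfold reaction, damping_ratio in *.
  pose proof (Rpower_pos 2 (- p)). pose proof (Rpower_pos A p). field. nra.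
Qed.

Lemma stair_time_le_telescope (d P : nat -> R) rho :
  0 <= rho -> (forall k, 0 <= P k) -> (forall k, d k <= rho * (P k - P (S k))) ->
  forall k, stair_time d k <= rho * P O.
Proof.
intros Hrho HP Hd k.
assert (Htel : forall k, stair_time d k <= rho * (P O - P k)).
{ induction k0 as [|k0 IH]; simpl; [lra|]. pose proof (Hd k0). lra. }
pose proof (Htel k). pose proof (HP k). nra.
Qed.

Lemma threshold_of_large_data p mu G :
  1 < p -> 0 < mu -> Rpower (mu * p * Rpower 2 p) (/ (p - 1)) < G ->
  mu / 2 < Rpower 2 (- p) * Rpower G (p - 1).
Proof.
intros Hp Hmu HG.
pose proof (Rpower_pos 2 p) as H2p.
assert (HX : 0 < mu * p * Rpower 2 p) by (apply Rmult_lt_0_compat; [apply Rmult_lt_0_compat|]; lra).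
assert (HGp : mu * p * Rpower 2 p < Rpower G (p - 1)).
{ replace (mu * p * Rpower 2 p)
    with (Rpower (Rpower (mu * p * Rpower 2 p) (/ (p - 1))) (p - 1))
    by (rewrite Rpower_mult, Rinv_l, Rpower_1; lra).
  apply Rlt_Rpower_l; [lra|]. split; [apply Rpower_pos | exact HG]. }
assert (Hinv : Rpower 2 (- p) * Rpower 2 p = 1)
  by (rewrite <- Rpower_plus, Rplus_opp_l; apply Rpower_O; lra).
pose proof (Rpower_pos 2 (- p)).
assert (Hscaled : Rpower 2 (- p) * (mu * p * Rpower 2 p) < Rpower 2 (- p) * Rpower G (p - 1))
  by (apply Rmult_lt_compat_l; assumption).
replace (Rpower 2 (- p) * (mu * p * Rpower 2 p))
  with (mu * p * (Rpower 2 (- p) * Rpower 2 p)) in Hscaled by ring.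
rewrite Hinv in Hscaled. nra.
Qed.

Lemma Sup_seq_plus_unbounded (u v : nat -> R) :
  (forall M, exists n, M <= u n + v n) ->
  Rbar_plus (Sup_seq (fun n => u n)) (Sup_seq (fun n => v n)) = p_infty.
Proof.
intros Hu.
pose proof (Sup_seq_correct (fun n => u n)) as Su.
pose proof (Sup_seq_correct (fun n => v n)) as Sv.
destruct (Sup_seq (fun n => u n)) as [a| |]; destruct (Sup_seq (fun n => v n)) as [b| |];
  try reflexivity;
  try (specialize (Su (u O) O); simpl in Su; lra);
  try (specialize (Sv (v O) O); simpl in Sv; lra).
destruct (Hu (a + b + 2)) as [n Hn].
destruct (Su (mkposreal 1 Rlt_0_1)) as [Ha _]. destruct (Sv (mkposreal 1 Rlt_0_1)) as [Hb _].
specialize (Ha n). specialize (Hb n). simpl in Ha, Hb. lra.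
Qed.

Lemma blowup_time_le p mu g1 g2 f g Ts x B :
  (forall tau, 0 < tau < Ts -> B < tau -> forall M, exists n,
     M <= phi_n p mu g1 g2 f g n x tau + psi_n p mu g1 g2 f g n x tau) ->
  Rbar_le (blowup_time p mu g1 g2 f g Ts x) B.
Proof.
intros Hunb. unfold blowup_time.
apply (proj2 (Lub_Rbar_correct _)). intros t [[Ht HtTs] Hfinite]. simpl.
destruct (Rle_dec t B) as [|HtB]; [assumption|]. exfalso.
set (tau := (Rmax 0 B + t) / 2).
pose proof (Rmax_l 0 B). pose proof (Rmax_r 0 B).
assert (Hmax : Rmax 0 B < t) by (apply Rmax_lub_lt; lra).
assert (Hsum := Sup_seq_plus_unbounded _ _
  (Hunb tau ltac:(unfold tau; lra) ltac:(unfold tau; lra))).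
specialize (Hfinite tau ltac:(unfold tau; lra)).
unfold phi_sup, psi_sup in Hfinite. rewrite Hsum in Hfinite. exact Hfinite.
Qed.

Lemma reaction_pos p mu A :
  0 < A -> mu / 2 < Rpower 2 (- p) * Rpower A (p - 1) -> 0 < reaction p mu A.
Proof. intros HA Hth. rewrite reaction_factor by exact HA. nra. Qed.

Section Blowup.

Variables (p mu g1 g2 r e : R) (f g : R -> R).
Hypotheses (Hp : 1 < p) (Hmu : 0 < mu) (Hg1 : 0 < g1) (Hg2 : 0 < g2) (He : 0 < e)
  (Hthreshold : mu / 2 < Rpower 2 (- p) * Rpower (g1 + g2) (p - 1))
  (Hdata : forall x, Rabs x < r -> g1 <= f x /\ g2 <= g x)
  (Hint : forall n c y t, Rabs c <= 1 -> in_cone r y t ->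
     ex_RInt (fun s => Nl p mu (phi_n p mu g1 g2 f g n) (psi_n p mu g1 g2 f g n)
                          (y + c * (t - s)) s) 0 t).

Definition level (k : nat) : R := (g1 + g2) * exp e ^ k.

(* The time the comparison ODE would need to climb from [level k] to [level (S k)]
   at the speed it has at [level k]. *)
Definition step_length (k : nat) : R :=
  (exp e - 1) * level k / (2 * reaction p mu (level k)).

Local Notation kappa :=
  (damping_ratio p mu (g1 + g2) / (1 - damping_ratio p mu (g1 + g2))).

Lemma level_ge k : g1 + g2 <= level k.
Proof.
unfold level. assert (1 <= exp e ^ k) by (apply pow_R1_Rle; pose proof (exp_ineq1_le e); lra).
nra.
Qed.

Lemma reaction_level_pos k : 0 < reaction p mu (level k).
Proof.
pose proof (level_ge k).
apply Rlt_le_trans with (reaction p mu (g1 + g2)).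
- apply reaction_pos; lra.
- apply (reaction_le p mu (g1 + g2)); lra.
Qed.

Lemma level_S k : level (S k) = level k + 2 * step_length k * reaction p mu (level k).
Proof.
unfold step_length. pose proof (reaction_level_pos k).
replace (level (S k)) with (level k * exp e) by (unfold level; simpl; ring).
field. lra.
Qed.

Lemma stair_time_le k :
  stair_time step_length k <= slack p kappa e * ode_blowup_time p mu (g1 + g2).
Proof.
assert (HzG : damping_ratio p mu (g1 + g2) < 1)
  by (apply damping_ratio_lt_1; [lra | apply reaction_pos; lra]).
pose proof (damping_ratio_pos p mu (g1 + g2) Hmu ltac:(lra)).
replace (g1 + g2) with (level O) at 3 by (unfold level; simpl; ring).
apply (stair_time_le_telescope step_length (fun k => ode_blowup_time p mu (level k))).
- unfold slack. pose proof (exp_pos (p * e)).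
  assert (exp (- (p - 1) * e) <= 1) by (apply exp_le_1; nra).
  assert (0 <= kappa) by (apply Rmult_le_pos; [lra | left; apply Rinv_0_lt_compat; lra]).
  apply Rmult_le_pos; nra.
- intros j. pose proof (level_ge j). apply ode_blowup_time_ge0; try lra.
  apply damping_ratio_lt_1, reaction_level_pos. lra.
- intros j. replace (level (S j)) with (level j * exp e) by (unfold level; simpl; ring).
  apply ode_blowup_time_drop; try lra.
  + pose proof (level_ge j). lra.
  + apply reaction_pos; lra.
Qed.

Lemma iterates_sum_unbounded y t :
  in_cone r y t -> slack p kappa e * ode_blowup_time p mu (g1 + g2) <= t ->
  forall M, exists n, M <= phi_n p mu g1 g2 f g n y t + psi_n p mu g1 g2 f g n y t.
Proof.
intros Hyt Ht M.
destruct (Pow_x_infinity (exp e)) with (b := M / (g1 + g2)) as [k Hk].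
{ rewrite Rabs_pos_eq by (left; apply exp_pos). pose proof (exp_ineq1 e). lra. }
specialize (Hk k (le_n k)). rewrite Rabs_pos_eq in Hk by (apply pow_le; left; apply exp_pos).
destruct (staircase p mu g1 g2 r f g Hp Hmu Hg1 Hg2 ltac:(lra) Hdata Hint
  level step_length ltac:(unfold level; simpl; ring) level_ge
  ltac:(intros j; unfold step_length; pose proof (level_ge j); pose proof (reaction_level_pos j);
        pose proof (exp_ineq1_le e); apply Rmult_le_pos; [nra | left; apply Rinv_0_lt_compat; lra])
  level_S k) as [n Hn].
exists n. destruct (Hn n (le_n n) y t Hyt) as [Hphi Hpsi].
{ eapply Rle_trans; [apply stair_time_le | exact Ht]. }
assert (M <= level k).
{ unfold level. apply Rmult_le_reg_r with (/ (g1 + g2)); [apply Rinv_0_lt_compat; lra|].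
  replace ((g1 + g2) * exp e ^ k * / (g1 + g2)) with (exp e ^ k) by (field; lra).
  exact (Rge_le _ _ Hk). }
lra.
Qed.

End Blowup.

Theorem lemma4p4 (p mu Rs Ts g1 g2 eps0 : R) (f g : R -> R) :
  1 < p -> 0 < mu -> p < 1 + 2 / mu ->
  0 < Rs -> 0 < Ts ->
  0 < g1 -> 0 < g2 ->
  g1 + g2 > Rmax 1 (Rpower (mu * p * Rpower 2 p) (/ (p - 1))) ->
  (* (A1) *)
  T1 p mu g1 g2 < Ts ->
  (* (A2) *)
  (forall x, Rabs x < Rs + Ts -> g1 <= f x /\ g2 <= g x) ->
  (* (A3) *)
  C4_closed_ball (Rs + Ts) f -> C4_closed_ball (Rs + Ts) g ->
  (* (A4) *)
  0 < eps0 ->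
  (forall x, Rabs x < Rs + Ts ->
     (2 + eps0) * (Rabs (Derive f x) + Rabs (Derive g x))
     <= Rpower 2 (- p) * Rpower (g1 + g2) p - mu / 2 * (g1 + g2)) ->
  forall x, Rabs x < Rs ->
    Rbar_lt (blowup_time p mu g1 g2 f g Ts x) (Finite Ts).
Proof.
intros Hp Hmu _ HRs HTs Hg1 Hg2 Hlarge HT1 Hdata [Hf _] [Hg _] _ _ x Hx.
assert (Hthreshold : mu / 2 < Rpower 2 (- p) * Rpower (g1 + g2) (p - 1)).
{ apply threshold_of_large_data; [exact Hp | exact Hmu |].
  eapply Rle_lt_trans; [apply Rmax_r | exact Hlarge]. }
assert (HT1pos : 0 <= T1 p mu g1 g2).
{ rewrite T1_eq_ode_blowup_time. apply ode_blowup_time_ge0; try lra.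
  apply damping_ratio_lt_1, reaction_pos; lra. }
set (kappa := damping_ratio p mu (g1 + g2) / (1 - damping_ratio p mu (g1 + g2))).
destruct (slack_mul_lt p kappa (T1 p mu g1 g2) Ts (conj HT1pos HT1)) as [e [He HeTs]].
apply Rbar_le_lt_trans with (slack p kappa e * T1 p mu g1 g2); [|exact HeTs].
apply blowup_time_le. intros tau Htau HtauB.
apply (iterates_sum_unbounded p mu g1 g2 (Rs + Ts) e f g); try lra; [exact Hdata | | |].
- intros. apply (ex_RInt_Nl_iterates _ _ _ _ _ _ (Rs + Ts)); auto; lra.
- split; lra.
- rewrite <- T1_eq_ode_blowup_time. unfold kappa in HtauB. lra.
Qed.
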